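(* Let $\beta\ge2$ and let $T\ge\beta$ be an even integer. For $b\in\{0,1\}$ let $\mathcal{L}^b$ be the LDS on $\mathbb{R}$ with dynamics $x_{t+1}=x_t-\frac\beta Tu_t+w_t^b$, initial state $x_1=1$, cost functions $c_t(x,u):=|x|+|u|$ if $t>T/2$ and $c_t(x,u):=0$ otherwise, perturbations $w_t^0:=0$ for all $t$, and $w_t^1:=-1$ if $t=T/2$, $w_t^1:=0$ otherwise. Let $\mathrm{Alg}$ be any randomized algorithm for online control and $b\in\{0,1\}$. Then the (random) trajectory $(x_t,u_t)_{t=1}^T$ produced by $\mathrm{Alg}$ in $\mathcal{L}^b$ satisfies, with probability $1$, $$\sum_{t=1}^Tc_t(x_t,u_t)=\sum_{t=T/2+1}^T(|x_t|+|u_t|)\ge\frac{T}{2\beta}|x_{T/2+1}|.$$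
   Context: Online control protocol: at each step $t$ the algorithm observes $x_t$, chooses $u_t\in\mathbb{R}$, then the cost $c_t(x_t,u_t)$ is incurred and the state evolves by the stated dynamics. *)

From HB Require Import structures.
From mathcomp Require Import all_boot all_order all_algebra.
From mathcomp Require Import reals.
Set Implicit Arguments. Unset Strict Implicit. Unset Printing Implicit Defensive.
Import Order.TTheory GRing.Theory Num.Theory.
Local Open Scope ring_scope.

Definition pert (R : realType) (T : nat) (b : bool) (t : nat) : R :=
  if b && (t == T./2)%N then -1 else 0.

Definition cost (R : realType) (T : nat) (t : nat) (x u : R) : R :=
  if (T./2 < t)%N then `|x| + `|u| else 0.

Definition is_traj (R : realType) (beta : R) (T : nat) (b : bool)
    (x u : nat -> R) : Prop :=
  x 1%N = 1 /\
  forall t : nat, (1 <= t)%N -> (t < T)%N ->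
    x t.+1 = x t - beta / T%:R * u t + pert R T b t.

From HB Require Import structures.
From mathcomp Require Import all_boot all_order all_algebra.
From mathcomp Require Import reals.
From mathcomp Require Import ring lra.
Import Order.TTheory GRing.Theory Num.Theory.
Local Open Scope ring_scope.

(* After the perturbation time T/2 the state obeys |x_{t+1}| >= |x_t| - c |u_t|
   with c = beta/T.  Let V be the total control cost over the window.  Every
   |x_t| in the window is at least |x_{T/2+1}| - c V, so the window costs at
   least L (|x_{T/2+1}| - c V) + V for any L <= T/2, which is at least
   L |x_{T/2+1}| as soon as c L <= 1; take L = T / (2 beta). *)

Section SlowDecay.

Variables (R : realFieldType) (c : R) (y v : nat -> R) (m n : nat).
Hypotheses (c_ge0 : 0 <= c) (y_ge0 : forall t, 0 <= y t)
  (v_ge0 : forall t, 0 <= v t).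
Hypothesis y_step :
  forall t, (m <= t)%N -> (t.+1 < n)%N -> y t - c * v t <= y t.+1.

Lemma slow_decay_drift t :
  (m <= t)%N -> (t < n)%N -> y m - c * \sum_(m <= k < t) v k <= y t.
Proof.
elim: t => [|t IH] mt tn.
  by move: mt; rewrite leqn0 => /eqP->; rewrite big_geq // mulr0 subr0.
move: mt; rewrite leq_eqVlt => /orP[/eqP<-|mt].
  by rewrite big_geq // mulr0 subr0.
have IHt := IH mt (ltnW tn).
have step := y_step _ mt tn.
rewrite big_nat_recr //= mulrDr; lra.
Qed.

Lemma slow_decay_sum_ge L :
  0 <= L -> L <= (n - m)%:R -> c * L <= 1 ->
  L * y m <= \sum_(m <= t < n) (y t + v t).
Proof.
move=> L_ge0 L_le cL_le1.
set V := \sum_(m <= t < n) v t.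
have V_ge0 : 0 <= V by apply: sumr_ge0.
have drift t : (m <= t < n)%N -> y m - c * V <= y t.
  move=> /andP[mt tn]; apply: le_trans _ (slow_decay_drift _ mt tn).
  rewrite lerD2l lerN2 ler_wpM2l // /V (big_cat_nat mt (ltnW tn)) /=.
  by rewrite lerDl sumr_ge0.
have sum_y_ge : L * (y m - c * V) <= \sum_(m <= t < n) y t.
  have [d_ge0|d_lt0] := leP 0 (y m - c * V).
    apply: le_trans (ler_wpM2r d_ge0 L_le) _.
    rewrite mulr_natl -sumr_const_nat.
    by apply: ler_sum_nat => t mtn; apply: drift.
  apply: le_trans _ (sumr_ge0 _ (fun t _ => y_ge0 t)).
  by rewrite mulr_ge0_le0 // ltW.
have cLV_le : c * L * V <= V by apply: ler_piMl.
rewrite big_split /= -/V; move: sum_y_ge; rewrite mulrBr; lra.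
Qed.

End SlowDecay.

Lemma sum_cost_tail (R : realType) (T : nat) (x u : nat -> R) :
  \sum_(1 <= t < T.+1) cost T t (x t) (u t)
    = \sum_((T./2).+1 <= t < T.+1) (`|x t| + `|u t|).
Proof.
have half_le : ((T./2).+1 <= T.+1)%N.
  by rewrite ltnS leq_half_double ltnW // ltnS -addnn leq_addr.
rewrite (big_cat_nat (isT : (1 <= (T./2).+1)%N) half_le) /=.
rewrite big_nat_cond big1 ?add0r; last first.
  by move=> t /andP[/andP[_ tT] _]; rewrite /cost ltnNge -ltnS tT.
by apply: eq_big_nat => t /andP[Tt _]; rewrite /cost Tt.
Qed.

Lemma traj_norm_step (R : realType) (beta : R) (T : nat) (b : bool)
    (x u : nat -> R) (t : nat) :
  0 <= beta -> is_traj beta T b x u -> (T./2 < t)%N -> (t < T)%N ->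
  `|x t| - beta / T%:R * `|u t| <= `|x t.+1|.
Proof.
move=> beta_ge0 [_ x_next] Tt tT.
have c_ge0 : 0 <= beta / T%:R by rewrite divr_ge0.
rewrite x_next ?(leq_trans _ Tt) // /pert.
rewrite (gtn_eqF Tt) andbF addr0.
by have := lerB_dist (x t) (beta / T%:R * u t); rewrite normrM ger0_norm.
Qed.

Theorem lemma11 (R : realType) (beta : R) (T : nat) (b : bool) (x u : nat -> R) :
  2 <= beta -> beta <= T%:R -> ~~ odd T ->
  is_traj beta T b x u ->
  \sum_(1 <= t < T.+1) cost T t (x t) (u t)
    = \sum_((T./2).+1 <= t < T.+1) (`|x t| + `|u t|) /\
  \sum_((T./2).+1 <= t < T.+1) (`|x t| + `|u t|)
    >= T%:R / (2 * beta) * `|x (T./2).+1|.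
Proof.
move=> beta_ge2 beta_leT T_even traj; split; first exact: sum_cost_tail.
have T_halves : T = (T./2 + T./2)%N by rewrite -[LHS](even_halfK T_even) -addnn.
have T_pos : 0 < T%:R :> R by lra.
apply: (@slow_decay_sum_ge _ (beta / T%:R)) => //.
- by rewrite divr_ge0 //; lra.
- by move=> t Tt tT; apply: traj_norm_step traj _ _ => //; lra.
- by rewrite divr_ge0 //; lra.
- have -> : (T.+1 - (T./2).+1 = T./2)%N by rewrite subSS {1}T_halves addnK.
  rewrite ler_pdivrMr; last lra.
  by rewrite {1}T_halves natrD; have := ler0n R T./2; nra.
- have -> : beta / T%:R * (T%:R / (2 * beta)) = 1 / 2.
    by field; rewrite !gt_eqF //; lra.
  lra.
Qed.
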